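(* Let $E$ be a simple type, $A_1,\dots,A_m,G$ subtypes of $E$, $t$ a normal $\lambda$-term, and $\alpha$ a free variable of $t$ which is not in application position in $t$ (no subterm of $t$ has the form $(\alpha)u$). Let $n\ge0$ and $p_n=\lambda x_1\dots\lambda x_n\lambda x\,x$. If $x_1:A_1,\dots,x_m:A_m\vdash_{\mathcal S} t[p_n/\alpha] : G$, then $Lg(E)\ge n$.
   Context: Simple types are built from type variables and type constants using $\rightarrow$ only; a subtype of $E$ is a subformula of $E$. $Lg(E)$ denotes the number of occurrences of $\rightarrow$ in $E$. The simply typed system $\mathcal S$ derives $\Gamma\vdash_{\mathcal S} t:A$ by: (ax) $\Gamma \vdash y : B$ for $y:B\in\Gamma$; ($\rightarrow_i$) from $\Gamma, x:B \vdash t : C$ infer $\Gamma \vdash \lambda x t : B \rightarrow C$; ($\rightarrow_e$) from $\Gamma \vdash u : B\rightarrow C$ and $\Gamma \vdash v : B$ infer $\Gamma \vdash (u)v : C$. $t[u/\alpha]$ is capture-avoiding substitution; normal means without $\beta$-redex. *)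

From Stdlib Require Import Arith List.
Import ListNotations.

Inductive stype : Type :=
| TVar : nat -> stype
| TConst : nat -> stype
| Arrow : stype -> stype -> stype.

Inductive subtype : stype -> stype -> Prop :=
| sub_refl : forall E, subtype E E
| sub_left : forall A B C, subtype A B -> subtype A (Arrow B C)
| sub_right : forall A B C, subtype A C -> subtype A (Arrow B C).

Fixpoint Lg (E : stype) : nat :=
  match E with
  | TVar _ | TConst _ => 0
  | Arrow A B => S (Lg A + Lg B)
  end.

(* Lambda terms with named variables; App u v is (u)v. *)
Inductive term : Type :=
| Var : nat -> term
| Lam : nat -> term -> term
| App : term -> term -> term.

Fixpoint normal (t : term) : bool :=
  match t with
  | Var _ => true
  | Lam _ b => normal b
  | App u v =>
      match u with Lam _ _ => false | _ => normal u && normal v end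
  end.

Fixpoint free_in (a : nat) (t : term) : bool :=
  match t with
  | Var y => Nat.eqb y a
  | Lam x b => negb (Nat.eqb x a) && free_in a b
  | App u v => free_in a u || free_in a v
  end.

Fixpoint not_app_pos (a : nat) (t : term) : bool :=
  match t with
  | Var _ => true
  | Lam _ b => not_app_pos a b
  | App u v =>
      match u with Var y => negb (Nat.eqb y a) | _ => true end
      && not_app_pos a u && not_app_pos a v
  end.

(* Substitution t[u/a].  This is capture-avoiding whenever u is closed,
   which is the only case used below (u = p_n is closed). *)
Fixpoint subst (t : term) (a : nat) (u : term) : term :=
  match t with
  | Var y => if Nat.eqb y a then u else Var y
  | Lam x b => if Nat.eqb x a then Lam x b else Lam x (subst b a u)
  | App v w => App (subst v a u) (subst w a u)
  end.

(* lams k n = \x_{k+1} ... \x_{k+n} \x0. x0  (variable names k+1..k+n, 0) *)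
Fixpoint lams (k n : nat) : term :=
  match n with
  | O => Lam 0 (Var 0)
  | S n' => Lam (S k) (lams (S k) n')
  end.

Definition pn (n : nat) : term := lams 0 n.

(* Contexts: lists of declarations, the most recent first. *)
Definition ctx := list (nat * stype).

Fixpoint lookup (G : ctx) (y : nat) : option stype :=
  match G with
  | [] => None
  | (x, B) :: G' => if Nat.eqb x y then Some B else lookup G' y
  end.

Inductive typS : ctx -> term -> stype -> Prop :=
| tS_ax : forall G y B, lookup G y = Some B -> typS G (Var y) B
| tS_lam : forall G x B C t, typS ((x, B) :: G) t C -> typS G (Lam x t) (Arrow B C)
| tS_app : forall G u v B C, typS G u (Arrow B C) -> typS G v B -> typS G (App u v) C.

(* Since [t] is normal and [alpha] is never applied, every application in [t]
   has a head variable other than [alpha], which the substitution leaves in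
   place; by the subformula property its type is then a subtype of a context
   type, hence of [E].  Descending from the root to an occurrence of [alpha]
   through abstraction bodies and both sides of applications therefore keeps
   every type inside [E], so the type of [p_n], which has more than [n]
   arrows, is a subtype of [E]. *)

From Stdlib Require Import Arith List Lia Bool.

Lemma subtype_Lg A E : subtype A E -> Lg A <= Lg E.
Proof. induction 1; simpl; lia. Qed.

Lemma subtype_trans A B E : subtype A B -> subtype B E -> subtype A E.
Proof.
  intros HAB HBE; induction HBE.
  - exact HAB.
  - apply sub_left; auto.
  - apply sub_right; auto.
Qed.

Lemma subtype_arrow_l B C E : subtype (Arrow B C) E -> subtype B E.
Proof. apply subtype_trans, sub_left, sub_refl. Qed.

Lemma subtype_arrow_r B C E : subtype (Arrow B C) E -> subtype C E.
Proof. apply subtype_trans, sub_right, sub_refl. Qed.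

Lemma lams_typed_Lg n k G A : typS G (lams k n) A -> n < Lg A.
Proof.
  revert k G A; induction n as [|n IH]; intros k G A H; inversion H; subst; simpl.
  - lia.
  - apply IH in H4; lia.
Qed.

Definition ctx_within (G : ctx) (E : stype) : Prop :=
  forall y B, lookup G y = Some B -> subtype B E.

Lemma ctx_within_cons x B G E :
  subtype B E -> ctx_within G E -> ctx_within ((x, B) :: G) E.
Proof.
  intros HB HG y C; simpl.
  destruct (x =? y); [intros [= <-]; exact HB | apply HG].
Qed.

Lemma lookup_combine_In xs As y B : lookup (combine xs As) y = Some B -> In B As.
Proof.
  revert As; induction xs as [|x xs IH]; intros [|A As]; simpl; try discriminate.
  destruct (x =? y); [intros [= ->]; now left | intros H; right; eauto].
Qed.

Lemma ctx_within_combine xs As E :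
  Forall (fun A => subtype A E) As -> ctx_within (combine xs As) E.
Proof.
  rewrite Forall_forall; intros HAs y B Hl.
  exact (HAs B (lookup_combine_In _ _ _ _ Hl)).
Qed.

(* A term whose head, after substituting for [alpha], is still a context variable. *)
Definition neutral (alpha : nat) (t : term) : Prop :=
  match t with
  | Var y => y <> alpha
  | Lam _ _ => False
  | App _ _ => True
  end.

Lemma app_head_neutral alpha u v :
  normal (App u v) = true -> not_app_pos alpha (App u v) = true -> neutral alpha u.
Proof.
  destruct u as [y | x b | u1 u2]; simpl; try easy.
  intros _ Hp. apply andb_true_iff in Hp as [[Hy _]%andb_true_iff _].
  now apply Nat.eqb_neq, negb_true_iff.
Qed.

Lemma not_app_pos_app alpha u v :
  not_app_pos alpha (App u v) = true ->
  not_app_pos alpha u = true /\ not_app_pos alpha v = true.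
Proof.
  simpl; intros Hp.
  apply andb_true_iff in Hp as [[_ Hu]%andb_true_iff Hv]; auto.
Qed.

Lemma normal_app u v : normal (App u v) = true -> normal u = true /\ normal v = true.
Proof. destruct u; simpl; try discriminate; [easy | apply andb_true_iff ..]. Qed.

Section Substitution.

Variables (E : stype) (alpha n : nat).

Lemma neutral_subst_type_within t : forall G A,
  normal t = true -> not_app_pos alpha t = true -> neutral alpha t ->
  ctx_within G E -> typS G (subst t alpha (pn n)) A -> subtype A E.
Proof.
  induction t as [y | x b _ | u IHu v _]; intros G A Hn Hp Hneu HG Ht; simpl in *.
  - apply Nat.eqb_neq in Hneu; rewrite Hneu in Ht.
    inversion Ht; subst; eauto.
  - contradiction.
  - destruct (normal_app _ _ Hn) as [Hnu _].
    destruct (not_app_pos_app _ _ _ Hp) as [Hpu _].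
    inversion Ht; subst.
    apply (subtype_arrow_r B), (IHu G); auto.
    now apply (app_head_neutral _ u v).
Qed.

Lemma subst_pn_bound t : forall G A,
  normal t = true -> not_app_pos alpha t = true -> free_in alpha t = true ->
  ctx_within G E -> subtype A E -> typS G (subst t alpha (pn n)) A -> n <= Lg E.
Proof.
  induction t as [y | x b IH | u IHu v IHv]; intros G A Hn Hp Hf HG HA Ht; simpl in *.
  - rewrite Hf in Ht.
    apply lams_typed_Lg in Ht; apply subtype_Lg in HA; lia.
  - apply andb_true_iff in Hf as [Hx Hf].
    apply negb_true_iff in Hx; rewrite Hx in Ht.
    inversion Ht as [| ? ? B C ? Hb |]; subst.
    apply (IH ((x, B) :: G) C); eauto using ctx_within_cons, subtype_arrow_l, subtype_arrow_r.
  - destruct (normal_app _ _ Hn) as [Hnu Hnv].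
    destruct (not_app_pos_app _ _ _ Hp) as [Hpu Hpv].
    inversion Ht as [| | ? ? ? B ? Hu Hv]; subst.
    assert (HBA : subtype (Arrow B A) E).
    { apply (neutral_subst_type_within u G); auto.
      now apply (app_head_neutral _ u v). }
    apply orb_true_iff in Hf as [Hf | Hf].
    + exact (IHu G (Arrow B A) Hnu Hpu Hf HG HBA Hu).
    + exact (IHv G B Hnv Hpv Hf HG (subtype_arrow_l _ _ _ HBA) Hv).
Qed.

End Substitution.

Theorem lemma2p2p6 :
  forall (E : stype) (xs : list nat) (As : list stype) (G : stype)
         (t : term) (alpha n : nat),
    length xs = length As ->
    NoDup xs ->
    Forall (fun A => subtype A E) As ->
    subtype G E ->
    normal t = true ->
    free_in alpha t = true ->
    not_app_pos alpha t = true ->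
    typS (combine xs As) (subst t alpha (pn n)) G ->
    n <= Lg E.
Proof.
  intros E xs As G t alpha n _ _ HAs HG Hn Hf Hp Ht.
  eapply subst_pn_bound; eauto using ctx_within_combine.
Qed.
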